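(* Let $d\in\{1,2\}$ and let $Q,V:\mathbb{Z}^d\to\mathbb{R}$. Suppose $h_Q$ is bounded above, let $E_0=\sup\sigma(h_Q)$ be its ground-state energy, and suppose there is a bounded function $\psi:\mathbb{Z}^d\to(0,\infty)$ with $\sum_{|m-n|=1}\psi(m)+Q(n)\psi(n)=E_0\psi(n)$ for all $n\in\mathbb{Z}^d$. If both $h_{Q+V}\le E_0$ and $h_{Q-V}\le E_0$ (i.e. $\langle\phi|h_{Q\pm V}|\phi\rangle\le E_0\|\phi\|^2$ for all finitely supported $\phi$), then $V\equiv0$.
   Context: For $W:\mathbb{Z}^d\to\mathbb{R}$, $h_W$ denotes the discrete Schrödinger operator on $\ell^2(\mathbb{Z}^d)$, $[h_W\phi](n)=\sum_{m:\,|m-n|=1}\phi(m)+W(n)\phi(n)$ (sum over the $2d$ nearest neighbours), understood via its quadratic form on finitely supported sequences. In the discrete setting the ground-state energy is the supremum of the spectrum, and a ground state is a (pointwise) solution of $h_Q\psi=E_0\psi$ with $E_0$ the ground-state energy. *)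

From HB Require Import structures.
From mathcomp Require Import all_boot all_order all_algebra.
From mathcomp Require Import reals.
Set Implicit Arguments. Unset Strict Implicit. Unset Printing Implicit Defensive.
Import Order.TTheory GRing.Theory Num.Theory.
Local Open Scope ring_scope.

Definition site (d : nat) := 'rV[int]_d.

Definition unitv (d : nat) (i : 'I_d) : site d := delta_mx 0 i.

Definition nbrs (d : nat) (n : site d) : seq (site d) :=
  [seq n + unitv i | i <- enum 'I_d] ++ [seq n - unitv i | i <- enum 'I_d].

Definition supported_on (R : realType) (d : nat) (phi : site d -> R) (s : seq (site d)) :=
  uniq s /\ forall n, n \notin s -> phi n = 0.

Definition hop (R : realType) (d : nat) (phi : site d -> R) (n : site d) : R :=
  \sum_(m <- nbrs n) phi m.

(* Quadratic form <phi | h_W | phi> for phi supported in s (independent of the choice of s). *)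
Definition qform (R : realType) (d : nat) (W : site d -> R) (phi : site d -> R)
  (s : seq (site d)) : R :=
  \sum_(n <- s) phi n * (hop phi n + W n * phi n).

Definition sqnorm (R : realType) (d : nat) (phi : site d -> R) (s : seq (site d)) : R :=
  \sum_(n <- s) phi n ^+ 2.

Definition form_le (R : realType) (d : nat) (W : site d -> R) (E : R) : Prop :=
  forall (phi : site d -> R) (s : seq (site d)),
    supported_on phi s -> qform W phi s <= E * sqnorm phi s.

Definition bounded_above (R : realType) (d : nat) (W : site d -> R) : Prop :=
  exists C : R, form_le W C.

(* E0 is the ground-state energy sup sigma(h_W), i.e. the least upper bound of
   the form (sup of Rayleigh quotients over finitely supported phi <> 0). *)
Definition ground_energy (R : realType) (d : nat) (W : site d -> R) (E0 : R) : Prop :=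
  form_le W E0 /\ forall E : R, form_le W E -> E0 <= E.

From HB Require Import structures.
From mathcomp Require Import all_boot all_order all_algebra.
From mathcomp Require Import reals.
From mathcomp Require Import zify ring lra.
Set Implicit Arguments. Unset Strict Implicit. Unset Printing Implicit Defensive.
Import Order.TTheory GRing.Theory Num.Theory.
Local Open Scope ring_scope.

(* Write phi = psi f.  The eigenvalue equation for psi turns E0 |phi|^2 - <phi, h_Q phi>
   into the Dirichlet form D(f) = 1/2 sum_n sum_{m ~ n} psi(n) psi(m) (f(n) - f(m))^2
   ([ground_form]), so h_{Q +- V} <= E0 says |sum_n V(n) psi(n)^2 f(n)^2| <= D(f).
   Polarising at f +- t delta_{n0} with f(n0) = 1 gives
   4 t |V(n0)| psi(n0)^2 <= 2 D(f) + 2 t^2 D(delta_{n0}).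
   For d <= 2 there are only O(k) sites at l1-distance k from n0, so for bounded psi the
   logarithmic cut-offs f(n) = 1 - H_{min(|n - n0|, M)} / H_M (H_k the harmonic numbers)
   have D(f) = O(1 / H_M) -> 0.  Taking D(f) <= t^2 and letting t -> 0 gives V(n0) = 0. *)

Lemma eq_big_seq_support (V : nmodType) (T : eqType) (F : T -> V) (s1 s2 : seq T) :
  uniq s1 -> uniq s2 -> (forall x, F x != 0 -> (x \in s1) && (x \in s2)) ->
  \sum_(x <- s1) F x = \sum_(x <- s2) F x.
Proof.
move=> u1 u2 sF; apply: perm_big_supp; apply: uniq_perm; rewrite ?filter_uniq //.
by move=> x; rewrite !mem_filter; case: (boolP (F x != 0)) => //= /sF /andP[-> ->].
Qed.

Lemma sum_seq_pred1 (V : nmodType) (T : eqType) (s : seq T) (x0 : T) (F : T -> V) :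
  uniq s -> x0 \in s -> \sum_(x <- s | x == x0) F x = F x0.
Proof. by move=> us s_x0; rewrite -big_filter (filter_pred1_uniq us s_x0) big_seq1. Qed.

Lemma sum_translate (V : nmodType) (T : zmodType) (K : T -> V) (e : T) (s : seq T) :
  uniq s -> (forall m, K m != 0 -> (m \in s) && (m - e \in s)) ->
  \sum_(n <- s) K (n + e) = \sum_(n <- s) K n.
Proof.
move=> us sK; rewrite -(big_map (fun n => n + e) predT K).
apply: eq_big_seq_support => //; first by rewrite map_inj_uniq // => a b /addIr.
move=> m /sK /andP[-> sme]; rewrite andbT; apply/mapP; exists (m - e) => //.
by rewrite subrK.
Qed.

Lemma size_nbrs d (n : site d) : size (nbrs n) = (d + d)%N.
Proof. by rewrite size_cat !size_map -enumT -cardT card_ord. Qed.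

Lemma nbrs_subr d (n m n0 : site d) : m \in nbrs n -> m - n0 \in nbrs (n - n0).
Proof.
rewrite !mem_cat => /orP[] /mapP[i i_d ->]; apply/orP.
- by left; apply/mapP; exists i => //; rewrite addrAC.
- by right; apply/mapP; exists i => //; rewrite addrAC.
Qed.

Lemma mem_nbrsD d (n : site d) i : n + unitv i \in nbrs n.
Proof. by rewrite mem_cat; apply/orP; left; apply/mapP; exists i; rewrite ?mem_enum. Qed.

Lemma mem_nbrsB d (n : site d) i : n - unitv i \in nbrs n.
Proof. by rewrite mem_cat; apply/orP; right; apply/mapP; exists i; rewrite ?mem_enum. Qed.

Lemma sum_nbrs_swap (V : nmodType) d (F : site d -> site d -> V) (s : seq (site d)) :
  uniq s -> (forall n m, m \in nbrs n -> F n m != 0 -> (n \in s) && (m \in s)) ->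
  \sum_(n <- s) \sum_(m <- nbrs n) F n m = \sum_(n <- s) \sum_(m <- nbrs n) F m n.
Proof.
move=> us sF; rewrite /nbrs.
under eq_bigr => n _ do rewrite big_cat /= !big_map.
under [RHS]eq_bigr => n _ do rewrite big_cat /= !big_map.
rewrite !big_split /= !(exchange_big _ s) addrC.
congr (_ + _); apply: eq_bigr => i _.
- rewrite -(@sum_translate _ _ (fun n => F n (n - unitv i)) (unitv i)) //.
    by apply: eq_bigr => n _; rewrite addrK.
  move=> m /(sF _ _ (mem_nbrsB m i)) /andP[-> ->].
  by rewrite andbT.
- rewrite -(@sum_translate _ _ (fun n => F n (n + unitv i)) (- unitv i)) //.
    by apply: eq_bigr => n _; rewrite subrK.
  move=> m /(sF _ _ (mem_nbrsD m i)) /andP[-> ?].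
  by rewrite opprK.
Qed.

Definition pot_form (R : realType) (d : nat) (W phi : site d -> R) (s : seq (site d)) : R :=
  \sum_(n <- s) W n * phi n ^+ 2.

Lemma qformD (R : realType) (d : nat) (W U phi : site d -> R) s :
  qform (fun n => W n + U n) phi s = qform W phi s + pot_form U phi s.
Proof. by rewrite /qform -big_split; apply: eq_bigr => n _ /=; ring. Qed.

Section GroundStateRepresentation.
Variables (R : realType) (d : nat) (psi : site d -> R).

Definition ground_form (s : seq (site d)) (f : site d -> R) : R :=
  \sum_(n <- s) \sum_(m <- nbrs n) psi n * psi m * (f n * (f n - f m)).

Lemma ground_state_repr (Q : site d -> R) (E0 : R) s f :
  (forall n, hop psi n + Q n * psi n = E0 * psi n) ->
  E0 * sqnorm (fun n => psi n * f n) s - qform Q (fun n => psi n * f n) s =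
  ground_form s f.
Proof.
move=> psi_eq; rewrite /sqnorm /qform /ground_form mulr_sumr -sumrB.
apply: eq_bigr => n _.
rewrite (eq_bigr (fun m => psi n * f n * f n * psi m - psi n * f n * (psi m * f m)));
  last by move=> m _; ring.
rewrite sumrB -!mulr_sumr.
have -> : Q n * (psi n * f n) = (E0 * psi n - hop psi n) * f n.
  by rewrite -(psi_eq n); ring.
rewrite /hop; ring.
Qed.

Lemma pot_form_le_ground (Q V : site d -> R) (E0 : R) s f :
  (forall n, hop psi n + Q n * psi n = E0 * psi n) ->
  form_le (fun n => Q n + V n) E0 -> form_le (fun n => Q n - V n) E0 ->
  supported_on f s -> `|pot_form V (fun n => psi n * f n) s| <= ground_form s f.
Proof.
move=> psi_eq le_QV le_QmV [us f_s].
have phi_s : supported_on (fun n => psi n * f n) s.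
  by split=> // n /f_s ->; rewrite mulr0.
have := le_QV _ _ phi_s; have := le_QmV _ _ phi_s.
rewrite !qformD -(ground_state_repr _ _ psi_eq).
have -> : pot_form (fun n => - V n) (fun n => psi n * f n) s =
          - pot_form V (fun n => psi n * f n) s.
  by rewrite /pot_form -sumrN; apply: eq_bigr => n _; ring.
rewrite ler_norml; lra.
Qed.

Lemma ground_form_parallelogram s f g t :
  ground_form s (fun n => f n + t * g n) + ground_form s (fun n => f n - t * g n) =
  2 * ground_form s f + 2 * t ^+ 2 * ground_form s g.
Proof.
rewrite /ground_form !mulr_sumr -!big_split; apply: eq_bigr => n _ /=.
by rewrite !mulr_sumr -!big_split; apply: eq_bigr => m _ /=; ring.
Qed.

Lemma pot_form_polarization (V : site d -> R) s f g t :
  pot_form V (fun n => psi n * (f n + t * g n)) s -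
  pot_form V (fun n => psi n * (f n - t * g n)) s =
  4 * t * \sum_(n <- s) V n * psi n ^+ 2 * f n * g n.
Proof. by rewrite /pot_form mulr_sumr -sumrB; apply: eq_bigr => n _; ring. Qed.

Definition nbr_closed_support (s : seq (site d)) (f : site d -> R) : Prop :=
  forall m, f m != 0 -> forall i, [/\ m \in s, m + unitv i \in s & m - unitv i \in s].

Lemma ground_form_sym s f : uniq s -> nbr_closed_support s f ->
  ground_form s f =
  2^-1 * \sum_(n <- s) \sum_(m <- nbrs n) psi n * psi m * (f n - f m) ^+ 2.
Proof.
move=> us f_s.
set P1 := \sum_(n <- s) \sum_(m <- nbrs n) psi n * psi m * f n ^+ 2.
set P2 := \sum_(n <- s) \sum_(m <- nbrs n) psi m * psi n * f m ^+ 2.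
have -> : ground_form s f = 2^-1 * \sum_(n <- s) \sum_(m <- nbrs n)
    psi n * psi m * (f n - f m) ^+ 2 + 2^-1 * (P1 - P2).
  rewrite /ground_form /P1 /P2 -sumrB !mulr_sumr -big_split; apply: eq_bigr => n _ /=.
  by rewrite -sumrB !mulr_sumr -big_split; apply: eq_bigr => m _ /=; field.
suff -> : P1 = P2 by rewrite subrr mulr0 addr0.
apply: sum_nbrs_swap => // n m; rewrite mem_cat => m_n.
rewrite mulf_eq0 negb_or expf_eq0 /= => /andP[_ /f_s f_n].
by case/orP: m_n => /mapP[i _ ->]; case: (f_n i) => -> /=.
Qed.

Definition dirac (n0 : site d) : site d -> R := fun n => (n == n0)%:R.

Lemma sum_mul_dirac (F : site d -> R) s n0 :
  uniq s -> n0 \in s -> \sum_(n <- s) F n * dirac n0 n = F n0.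
Proof.
move=> us s_n0; rewrite -(sum_seq_pred1 F us s_n0) [RHS]big_mkcond /=.
by apply: eq_bigr => n _; rewrite /dirac; case: (n == n0); rewrite ?mulr1 ?mulr0.
Qed.

Lemma ground_form_dirac_le s n0 :
  (forall n, 0 <= psi n) -> uniq s -> n0 \in s ->
  ground_form s (dirac n0) <= psi n0 * hop psi n0.
Proof.
move=> psi_ge0 us s_n0.
rewrite /ground_form (bigID (fun n => n == n0)) /= sum_seq_pred1 //.
rewrite [X in _ + X]big1 ?addr0 => [|n /negbTE n_n0]; last first.
  by rewrite big1 // => m _; rewrite /dirac n_n0 !mul0r mulr0.
rewrite /hop mulr_sumr; apply: ler_sum => m _; rewrite /dirac eqxx mul1r.
by case: (m == n0); rewrite ?subrr ?mulr0 ?subr0 ?mulr1 ?mulr_ge0.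
Qed.

Definition recurrent (n0 : site d) : Prop :=
  forall eps, 0 < eps -> exists s f,
    [/\ supported_on f s, n0 \in s, f n0 = 1 & ground_form s f <= eps].

Section PotentialAtRecurrentSite.
Variables (Q V : site d -> R) (E0 : R) (n0 : site d).
Hypotheses (psi_gt0 : forall n, 0 < psi n)
  (psi_eq : forall n, hop psi n + Q n * psi n = E0 * psi n)
  (le_QV : form_le (fun n => Q n + V n) E0)
  (le_QmV : form_le (fun n => Q n - V n) E0)
  (rec_n0 : recurrent n0).

Lemma pot_dirac_le t : 0 < t ->
  2 * `|V n0 * psi n0 ^+ 2| <= t * (1 + psi n0 * hop psi n0).
Proof.
move=> t_gt0.
have [s [f [[us f_s] s_n0 f_n0] small_f]] := rec_n0 (mulr_gt0 t_gt0 t_gt0).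
have off_s n : n \notin s -> f n = 0 /\ dirac n0 n = 0.
  by move=> s'n; rewrite f_s // /dirac; case: eqP s'n => // ->; rewrite s_n0.
have supp_p : supported_on (fun n => f n + t * dirac n0 n) s.
  by split=> // n /off_s[-> ->]; rewrite mulr0 addr0.
have supp_m : supported_on (fun n => f n - t * dirac n0 n) s.
  by split=> // n /off_s[-> ->]; rewrite mulr0 subr0.
have pot_p := pot_form_le_ground psi_eq le_QV le_QmV supp_p.
have pot_m := pot_form_le_ground psi_eq le_QV le_QmV supp_m.
have two_sides : 4 * t * `|V n0 * psi n0 ^+ 2| <=
    ground_form s (fun n => f n + t * dirac n0 n) +
    ground_form s (fun n => f n - t * dirac n0 n).
  apply: le_trans (lerD pot_p pot_m); apply: le_trans (ler_normB _ _).
  rewrite pot_form_polarization sum_mul_dirac // f_n0 mulr1 [X in _ <= X]normrM.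
  by rewrite (@ger0_norm _ (4 * t)) // mulr_ge0 // ltW.
rewrite ground_form_parallelogram in two_sides.
have := ground_form_dirac_le (fun n => ltW (psi_gt0 n)) us s_n0.
have : 0 <= t ^+ 2 by rewrite sqr_ge0.
rewrite expr2 in small_f two_sides *.
nra.
Qed.

Lemma pot_eq0_at_recurrent : V n0 = 0.
Proof.
set K := psi n0 * hop psi n0.
have K_ge0 : 0 <= K.
  by apply: mulr_ge0; [exact: ltW | apply: sumr_ge0 => m _; exact: ltW].
suff : `|V n0 * psi n0 ^+ 2| <= 0.
  rewrite normr_le0 mulf_eq0 expf_eq0 /= => /orP[/eqP // | /eqP psi0].
  by have := psi_gt0 n0; rewrite psi0 ltxx.
have K1_gt0 : 0 < 1 + K by lra.
apply/ler_addgt0Pr => e e_gt0; rewrite add0r.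
have := pot_dirac_le (divr_gt0 e_gt0 K1_gt0).
rewrite -/K divfK ?lt0r_neq0 //; lra.
Qed.

End PotentialAtRecurrentSite.
End GroundStateRepresentation.

Definition l1norm d (x : site d) : nat := (\sum_(i < d) absz (x ord0 i))%N.

Lemma l1norm0 d : l1norm (0 : site d) = 0%N.
Proof. by rewrite /l1norm big1 // => i _; rewrite mxE. Qed.

Lemma l1norm_bump_le d (x y : site d) i :
  (forall j, j != i -> y ord0 j = x ord0 j) ->
  (absz (y ord0 i) <= (absz (x ord0 i)).+1)%N -> (l1norm y <= (l1norm x).+1)%N.
Proof.
move=> y_x y_i; rewrite /l1norm (bigD1 i) //= [in X in (_ <= X.+1)%N](bigD1 i) //=.
rewrite (eq_bigr (fun j => absz (x ord0 j))); last by move=> j /y_x ->.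
lia.
Qed.

Lemma l1norm_unitv_le d (x : site d) i :
  (l1norm (x + unitv i)%R <= (l1norm x).+1)%N /\
  (l1norm (x - unitv i)%R <= (l1norm x).+1)%N.
Proof.
split; apply: (@l1norm_bump_le _ _ _ i) => [j j_i |] /=;
  rewrite !mxE ?(negbTE j_i) ?andbF ?addr0 ?subr0 ?eqxx //=; lia.
Qed.

Lemma l1norm_nbrs d (n m : site d) : m \in nbrs n ->
  (l1norm m <= (l1norm n).+1)%N /\ (l1norm n <= (l1norm m).+1)%N.
Proof.
rewrite mem_cat => /orP[] /mapP[i _ ->].
- have [le_p _] := l1norm_unitv_le n i.
  have [_ le_m] := l1norm_unitv_le (n + unitv i) i.
  by rewrite addrK in le_m.
- have [_ le_m] := l1norm_unitv_le n i.
  have [le_p _] := l1norm_unitv_le (n - unitv i) i.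
  by rewrite subrK in le_p.
Qed.

Section HarmonicCutoff.
Variable R : realFieldType.

Definition harmonic_num (k : nat) : R := \sum_(0 <= j < k) (j.+1%:R)^-1.

Lemma harmonic_num0 : harmonic_num 0 = 0.
Proof. by rewrite /harmonic_num big_geq. Qed.

Lemma harmonic_numS k : harmonic_num k.+1 = harmonic_num k + (k.+1%:R)^-1.
Proof. by rewrite /harmonic_num big_nat_recr. Qed.

Lemma harmonic_num_ge0 k : 0 <= harmonic_num k.
Proof. by apply: sumr_ge0 => j _; rewrite invr_ge0 ler0n. Qed.

Lemma harmonic_num_ge1 k : (0 < k)%N -> 1 <= harmonic_num k.
Proof.
case: k => // k _; rewrite /harmonic_num big_nat_recl // invr1 lerDl.
by apply: sumr_ge0 => j _; rewrite invr_ge0 ler0n.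
Qed.

Lemma harmonic_num_gt0 k : (0 < k)%N -> 0 < harmonic_num k.
Proof. by move/harmonic_num_ge1; apply: lt_le_trans. Qed.

Lemma harmonic_numS_le M : (0 < M)%N -> harmonic_num M.+1 <= 2 * harmonic_num M.
Proof.
move=> M_gt0; have := harmonic_num_ge1 M_gt0.
have : (M.+1%:R)^-1 <= 1 :> R by rewrite invf_le1 ?ler1n ?ltr0n.
rewrite harmonic_numS; set u := (M.+1%:R)^-1; lra.
Qed.

Lemma harmonic_num_double n : (0 < n)%N ->
  harmonic_num n + 2^-1 <= harmonic_num (n + n).
Proof.
move=> n_gt0; rewrite /harmonic_num [X in _ <= X](big_cat_nat (n := n)) ?leq_addr //=.
rewrite lerD2l.
have n_pos : 0 < n%:R :> R by rewrite ltr0n.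
apply: le_trans (_ : \sum_(n <= i < n + n) ((n + n)%:R)^-1 <= _).
  rewrite sumr_const_nat addnK -mulr_natr natrD le_eqVlt; apply/orP; left.
  by apply/eqP; field; rewrite gt_eqF //; lra.
apply: ler_sum_nat => j /andP[_ j_lt]; rewrite lef_pV2 ?posrE ?ltr0n ?ler_nat //; lia.
Qed.

Lemma harmonic_num_exp2 j : j%:R / 2 <= harmonic_num (2 ^ j).
Proof.
elim: j => [|j IH]; first by rewrite mul0r harmonic_num_ge0.
have := harmonic_num_double (expn_gt0 2 j).
rewrite expnS mul2n -addnn -[j.+1]addn1 natrD; lra.
Qed.

Definition cutoff (M k : nat) : R := 1 - harmonic_num (minn k M) / harmonic_num M.

Definition invsq (k : nat) : R := (k.+1%:R ^+ 2)^-1.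

Lemma cutoff0 M : cutoff M 0 = 1.
Proof. by rewrite /cutoff min0n harmonic_num0 mul0r subr0. Qed.

Lemma cutoff_eq0 M k : (0 < M)%N -> (M <= k)%N -> cutoff M k = 0.
Proof.
move=> M_gt0 Mk.
by rewrite /cutoff (minn_idPr Mk) divff ?subrr // gt_eqF ?harmonic_num_gt0.
Qed.

Lemma cutoff_step_sq M k : (0 < M)%N ->
  (cutoff M k - cutoff M k.+1) ^+ 2 <= invsq k / harmonic_num M ^+ 2.
Proof.
move=> M_gt0; have H_gt0 := harmonic_num_gt0 M_gt0.
rewrite /cutoff; case: (ltnP k M) => kM.
- rewrite (minn_idPl kM) harmonic_numS /invsq le_eqVlt; apply/orP; left.
  have k_ge0 := ler0n R k; apply/eqP; field; rewrite !gt_eqF //; lra.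
- rewrite (minn_idPr (leqW kM)) subrr expr0n /=.
  by rewrite divr_ge0 ?sqr_ge0 // invr_ge0 sqr_ge0.
Qed.

Lemma invsq_le k : invsq k <= 4 * invsq k.+1.
Proof.
rewrite /invsq -subr_ge0; set x : R := k%:R; have x_ge0 : 0 <= x := ler0n R k.
have -> : k.+1%:R = x + 1 :> R by rewrite -addn1 natrD.
have -> : k.+2%:R = x + 2 :> R by rewrite -addn2 natrD.
have -> : 4 * ((x + 2) ^+ 2)^-1 - ((x + 1) ^+ 2)^-1 =
          (3 * x ^+ 2 + 4 * x) / ((x + 1) ^+ 2 * (x + 2) ^+ 2).
  by field; rewrite !gt_eqF //; lra.
by rewrite divr_ge0 ?mulr_ge0 ?sqr_ge0 //; nra.
Qed.

Lemma cutoff_nbr_sq M j k : (0 < M)%N -> (j <= k.+1)%N -> (k <= j.+1)%N ->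
  (cutoff M j - cutoff M k) ^+ 2 <= 4 * invsq k / harmonic_num M ^+ 2.
Proof.
move=> M_gt0 jk kj.
have H2_gt0 : 0 < harmonic_num M ^+ 2 by rewrite exprn_gt0 ?harmonic_num_gt0.
have invsq_ge0 i : 0 <= invsq i by rewrite invr_ge0 sqr_ge0.
have [->|[->|->]] : j = k.+1 \/ j = k \/ k = j.+1 by lia.
- rewrite -opprB sqrrN; apply: le_trans (cutoff_step_sq k M_gt0) _.
  by rewrite ler_pM2r ?invr_gt0 //; have := invsq_ge0 k; lra.
- rewrite subrr expr0n /=; apply: divr_ge0 (ltW H2_gt0).
  by apply: mulr_ge0 (invsq_ge0 k).
- apply: le_trans (cutoff_step_sq j M_gt0) _.
  by rewrite ler_pM2r ?invr_gt0 // invsq_le.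
Qed.

End HarmonicCutoff.

Lemma harmonic_num_unbounded (R : archiRealFieldType) (T : R) :
  exists M, (0 < M)%N /\ T <= harmonic_num R M.
Proof.
have T2_lt := archi_boundP (normr_ge0 (2 * T)).
exists (2 ^ Num.Def.archi_bound `|2 * T|%R)%N; split; first by rewrite expn_gt0.
apply: le_trans (harmonic_num_exp2 R _); have := ler_norm (2 * T); lra.
Qed.

Definition int_ball (L : nat) : seq int :=
  0 :: [seq k.+1%:Z | k <- iota 0 L] ++ [seq - k.+1%:Z | k <- iota 0 L].

Lemma int_ball_uniq L : uniq (int_ball L).
Proof.
rewrite /int_ball cons_uniq mem_cat cat_uniq !map_inj_uniq ?iota_uniq //=;
  try by move=> a b; lia.
rewrite andbT; apply/andP; split.
  by apply/norP; split; apply/negP => /mapP[k _]; lia.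
by apply/hasP => -[y /mapP[k _ ->] /mapP[j _]]; lia.
Qed.

Lemma mem_int_ball L a : (absz a <= L)%N -> a \in int_ball L.
Proof.
case: a => [[|k]|k] /= a_L; rewrite /int_ball in_cons mem_cat ?eqxx //.
- by apply/orP; right; apply/orP; left; apply/mapP; exists k; rewrite // mem_iota; lia.
- by apply/orP; right; apply/orP; right; apply/mapP; exists k; rewrite // mem_iota; lia.
Qed.

Lemma sum_int_ball (V : nmodType) L (g : nat -> V) :
  \sum_(a <- int_ball L) g (absz a) = g 0%N + (\sum_(0 <= k < L) g k.+1) *+ 2.
Proof. by rewrite /int_ball big_cons big_cat !big_map /= /index_iota subn0 mulr2n. Qed.

Section IntBallSums.
Variable R : realFieldType.

Lemma invsq_le_inv k : invsq R k <= (k.+1%:R)^-1.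
Proof.
have k1_ge1 : 1 <= k.+1%:R :> R by rewrite ler1n.
by rewrite /invsq lef_pV2 ?posrE ?exprn_gt0 ?ltr0n //; nra.
Qed.

Lemma invsq_le_telescope y : (0 < y)%N -> invsq R y <= (y%:R)^-1 - (y.+1%:R)^-1.
Proof.
move=> y_gt0; have y_ge1 : 1 <= y%:R :> R by rewrite ler1n.
have -> : (y%:R)^-1 - (y.+1%:R)^-1 = (y%:R * y.+1%:R)^-1 :> R.
  by rewrite -natr1; field; rewrite !gt_eqF //; lra.
rewrite /invsq lef_pV2 ?posrE ?exprn_gt0 ?mulr_gt0 ?ltr0n // -natr1; nra.
Qed.

Lemma sum_invsq_telescope x L :
  \sum_(0 <= k < L) invsq R (x + k.+1) <= (x.+1%:R)^-1 - ((x + L).+1%:R)^-1.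
Proof.
elim: L => [|L IH]; first by rewrite big_geq // addn0 subrr.
rewrite big_nat_recr //= addnS.
by apply: le_trans (lerD IH (invsq_le_telescope (ltn0Sn _))) _; rewrite addrA subrK.
Qed.

Lemma sum_int_ball_invsq x L :
  \sum_(b <- int_ball L) invsq R (x + absz b) <= 3 * (x.+1%:R)^-1.
Proof.
rewrite (sum_int_ball L (fun k => invsq R (x + k))) addn0 mulr2n.
have := sum_invsq_telescope x L; have := invsq_le_inv x.
have : 0 <= ((x + L).+1%:R)^-1 :> R by rewrite invr_ge0 ler0n.
set u := (x.+1%:R)^-1; set v := ((x + L).+1%:R)^-1; lra.
Qed.

Lemma sum_int_ball_inv L :
  \sum_(a <- int_ball L) ((absz a).+1%:R)^-1 <= 2 * harmonic_num R L.+1 :> R.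
Proof.
rewrite (sum_int_ball L (fun k => (k.+1%:R)^-1)) /harmonic_num big_nat_recl //.
rewrite invr1 mulr2n; set S := \sum_(0 <= k < L) _.
have : 0 <= S by apply: sumr_ge0 => k _; rewrite invr_ge0 ler0n.
lra.
Qed.

End IntBallSums.

Definition row1 (a : int) : site 1 := \row_(j < 1) a.
Definition box1 (L : nat) : seq (site 1) := [seq row1 a | a <- int_ball L].

Lemma l1norm_row1 a : l1norm (row1 a) = absz a.
Proof. by rewrite /l1norm big_ord1 mxE. Qed.

Lemma box1_uniq L : uniq (box1 L).
Proof. by rewrite map_inj_uniq ?int_ball_uniq // => a b /rowP /(_ ord0); rewrite !mxE. Qed.

Lemma box1_ball L (x : site 1) : (l1norm x <= L)%N -> x \in box1 L.
Proof.
have -> : x = row1 (x ord0 ord0) by apply/rowP => j; rewrite mxE ord1.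
by rewrite l1norm_row1 => x_L; apply: map_f; exact: mem_int_ball.
Qed.

Lemma box1_invsq (R : realFieldType) L :
  \sum_(x <- box1 L) invsq R (l1norm x) <= 6 * harmonic_num R L.+1.
Proof.
apply: le_trans (_ : 2 * harmonic_num R L.+1 <= _); last first.
  by have := harmonic_num_ge0 R L.+1; lra.
apply: le_trans (sum_int_ball_inv R L); rewrite big_map.
by apply: ler_sum => a _; rewrite l1norm_row1 invsq_le_inv.
Qed.

Definition row2 (a b : int) : site 2 := \row_(j < 2) (if j == ord0 then a else b).
Definition box2 (L : nat) : seq (site 2) :=
  [seq row2 a b | a <- int_ball L, b <- int_ball L].

Lemma l1norm_row2 a b : l1norm (row2 a b) = (absz a + absz b)%N.
Proof. by rewrite /l1norm big_ord_recl big_ord_recl big_ord0 !mxE /= addn0. Qed.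

Lemma row2_eta (x : site 2) : x = row2 (x ord0 ord0) (x ord0 ord_max).
Proof.
apply/rowP => j; rewrite mxE ord1.
by case: j => [[|[|]]] //= j_lt; congr (x _ _); apply: val_inj.
Qed.

Lemma box2_uniq L : uniq (box2 L).
Proof.
apply: allpairs_uniq; rewrite ?int_ball_uniq // => -[a b] [a' b'] _ _ /= ab_eq.
have := congr1 (fun x : site 2 => x ord0 ord0) ab_eq.
have := congr1 (fun x : site 2 => x ord0 ord_max) ab_eq.
by rewrite !mxE /= => -> ->.
Qed.

Lemma box2_ball L (x : site 2) : (l1norm x <= L)%N -> x \in box2 L.
Proof.
rewrite [x]row2_eta l1norm_row2 => x_L.
by apply: allpairs_f; apply: mem_int_ball; lia.
Qed.

Lemma box2_invsq (R : realFieldType) L :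
  \sum_(x <- box2 L) invsq R (l1norm x) <= 6 * harmonic_num R L.+1.
Proof.
apply: le_trans (_ : 3 * \sum_(a <- int_ball L) ((absz a).+1%:R)^-1 <= _).
  rewrite /box2 big_allpairs_dep mulr_sumr; apply: ler_sum => a _.
  under eq_bigr => b _ do rewrite l1norm_row2.
  exact: sum_int_ball_invsq.
have := sum_int_ball_inv R L; set S := \sum_(a <- _) _; lra.
Qed.

Section CutoffRecurrence.
Variables (R : realType) (d : nat) (psi : site d -> R) (B : R).
Hypotheses (psi_gt0 : forall n, 0 < psi n) (psi_le : forall n, psi n <= B).
Variable box : nat -> seq (site d).
Hypotheses (box_uniq : forall L, uniq (box L))
  (box_ball : forall L x, (l1norm x <= L)%N -> x \in box L)
  (* The only place where d <= 2 enters: there are O(k) sites at distance k. *)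
  (box_invsq : forall L,
     \sum_(x <- box L) invsq R (l1norm x) <= 6 * harmonic_num R L.+1).

Section Cutoff.
Variables (M : nat) (n0 : site d).
Hypothesis M_gt0 : (0 < M)%N.

Let s := [seq x + n0 | x <- box M].
Let f (n : site d) := cutoff R M (l1norm (n - n0)).
Let H := harmonic_num R M.

Lemma mem_cutoff_box m : (l1norm (m - n0)%R <= M)%N -> m \in s.
Proof. by move=> m_M; apply/mapP; exists (m - n0); rewrite ?subrK ?box_ball. Qed.

Lemma cutoff_ne0 m : f m != 0 -> (l1norm (m - n0)%R < M)%N.
Proof. by rewrite ltnNge; apply: contraNN => /(cutoff_eq0 R M_gt0) f_m; rewrite /f f_m. Qed.

Lemma cutoff_supported : supported_on f s.
Proof.
split; first by rewrite map_inj_uniq // => a b /addIr.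
move=> m; apply: contraNeq => /cutoff_ne0 m_M; exact: mem_cutoff_box (ltnW m_M).
Qed.

Lemma cutoff_nbr_closed : nbr_closed_support s f.
Proof.
move=> m /cutoff_ne0 m_M i; have [m_p m_m] := l1norm_unitv_le (m - n0) i.
split; apply: mem_cutoff_box; first exact: ltnW.
- by rewrite addrAC (leq_trans m_p m_M).
- by rewrite addrAC (leq_trans m_m m_M).
Qed.

Lemma cutoff_nbrs_le n :
  \sum_(m <- nbrs n) psi n * psi m * (f n - f m) ^+ 2 <=
  (B ^+ 2 * (4 * invsq R (l1norm (n - n0)) / H ^+ 2)) *+ (d + d).
Proof.
rewrite -(size_nbrs n) -iter_addr_0 -count_predT -big_const_seq.
rewrite big_seq [X in _ <= X]big_seq; apply: ler_sum => m m_n.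
have [mn nm] := l1norm_nbrs (nbrs_subr n0 m_n).
apply: ler_pM; [exact: mulr_ge0 (ltW _) (ltW _) | exact: sqr_ge0 | |].
- by have := psi_gt0 n; have := psi_gt0 m; have := psi_le n; have := psi_le m; nra.
- by rewrite /f -opprB sqrrN cutoff_nbr_sq.
Qed.

Lemma ground_form_cutoff_le : ground_form psi s f <= 48 * d%:R * B ^+ 2 / H.
Proof.
have H_gt0 : 0 < H := harmonic_num_gt0 R M_gt0.
set S := \sum_(x <- box M) invsq R (l1norm x).
have S_le : S <= 12 * H.
  have := harmonic_numS_le R M_gt0; have := box_invsq M; rewrite -/S -/H; lra.
have [s_uniq _] := cutoff_supported.
rewrite (ground_form_sym psi s_uniq cutoff_nbr_closed).
apply: le_trans (_ : 2^-1 * ((8 * d%:R * B ^+ 2 / H ^+ 2) * S) <= _).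
  rewrite ler_pM2l ?invr_gt0 // /S big_map mulr_sumr; apply: ler_sum => x _.
  apply: le_trans (cutoff_nbrs_le (x + n0)) _; rewrite addrK.
  by rewrite le_eqVlt -mulr_natr natrD; apply/orP; left; apply/eqP; ring.
have c_ge0 : 0 <= 8 * d%:R * B ^+ 2 / H ^+ 2.
  apply: divr_ge0 (sqr_ge0 _); apply: mulr_ge0 (sqr_ge0 _); exact: mulr_ge0.
apply: le_trans (_ : 2^-1 * (8 * d%:R * B ^+ 2 / H ^+ 2 * (12 * H)) <= _).
  by rewrite ler_pM2l ?invr_gt0 // ler_wpM2l.
by rewrite le_eqVlt; apply/orP; left; apply/eqP; field; rewrite gt_eqF.
Qed.

End Cutoff.

Lemma recurrent_by_cutoff n0 : recurrent psi n0.
Proof.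
move=> eps eps_gt0.
have [M [M_gt0 H_large]] := harmonic_num_unbounded (48 * d%:R * B ^+ 2 / eps).
have H_gt0 := harmonic_num_gt0 R M_gt0.
exists [seq x + n0 | x <- box M], (fun n => cutoff R M (l1norm (n - n0))); split.
- exact: cutoff_supported.
- by apply: mem_cutoff_box; rewrite // subrr l1norm0.
- by rewrite subrr l1norm0 cutoff0.
apply: le_trans (@ground_form_cutoff_le M n0 M_gt0) _.
by move: H_large; rewrite !ler_pdivrMr // [eps * _]mulrC.
Qed.

End CutoffRecurrence.

Theorem theorem1p4 (R : realType) (d : nat) (Q V : site d -> R) (E0 : R)
  (psi : site d -> R) :
  (d = 1%N \/ d = 2%N) ->
  bounded_above Q ->
  ground_energy Q E0 ->
  (exists B : R, forall n, psi n <= B) ->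
  (forall n, 0 < psi n) ->
  (forall n, hop psi n + Q n * psi n = E0 * psi n) ->
  form_le (fun n => Q n + V n) E0 ->
  form_le (fun n => Q n - V n) E0 ->
  forall n, V n = 0.
Proof.
move=> d12 _ _ [B psi_le] psi_gt0 psi_eq le_QV le_QmV n.
apply: (pot_eq0_at_recurrent psi_gt0 psi_eq le_QV le_QmV).
case: d12 => d_eq; subst d.
- exact: (recurrent_by_cutoff psi_gt0 psi_le box1_uniq box1_ball (box1_invsq R)).
- exact: (recurrent_by_cutoff psi_gt0 psi_le box2_uniq box2_ball (box2_invsq R)).
Qed.
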